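(* For $A=(a_{ij}) \in {\operatorname{\mathsf{TPD}}}_n(\mathbb{S}_{\max}^{\vee})$ with the diagonal elements $d_n \leq \cdots \leq d_1$ we have \[ P_A = \bigoplus_{k=0}^{n} \bigg((\ominus \mathbf{1})^{n-k} (\prod_{i\in [n-k]}d_i)\bigg)\mathsf{X}^{k}\enspace .\]
   Context: $\mathbb{S}_{\max}$ is the symmetrized tropical semiring over a divisible totally ordered abelian group, with zero $\mathbf{0}$, unit $\mathbf{1}$, minus $\ominus$; $\mathbb{S}_{\max}^\vee$ is the set of signed elements. $A\in{\operatorname{\mathsf{TPD}}}_n(\mathbb{S}_{\max}^\vee)$: $A$ symmetric with signed entries, $\mathbf{0}<x^TAx$ for all nonzero signed vectors $x$ (equivalently $\mathbf{0}<a_{ii}$, $a_{ij}^2<a_{ii}a_{jj}$ for $i\ne j$), where $a<b$ iff $b\ominus a$ is positive. $P_A=\det(\mathsf{X} I\ominus A)$ is the formal characteristic polynomial over $\mathbb{S}_{\max}$ (signed determinant, expanded formally). $[m]=\{1,\dots,m\}$, and the empty product ($[0]$) equals $\mathbf{1}$. *)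

From mathcomp Require Import all_boot all_order all_algebra all_fingroup.
Set Implicit Arguments. Unset Strict Implicit. Unset Printing Implicit Defensive.
Import GRing.Theory.
Local Open Scope ring_scope.

(* The value group: a (zmodType) abelian group G (written additively, so that
   tropical multiplication of moduli is +) with a relation le that is a
   translation-invariant total order, and G is divisible. *)
Definition div_tot_ord_group (G : zmodType) (le : rel G) : Prop :=
  [/\ (forall a, le a a) /\ (forall a b, le a b -> le b a -> a = b),
      (forall a b c, le a b -> le b c -> le a c),
      (forall a b, le a b \/ le b a),
      (forall a b c, le a b -> le (a + c) (b + c)) &
      (forall (x : G) (m : nat), (0 < m)%N -> exists y : G, y *+ m = x)].

Inductive sgn := Pos | Neg | Bal.

Definition sgn_join (s t : sgn) : sgn :=
  match s, t with
  | Pos, Pos => Pos | Neg, Neg => Neg | _, _ => Bal end.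
Definition sgn_mul (s t : sgn) : sgn :=
  match s, t with
  | Bal, _ => Bal | _, Bal => Bal
  | Pos, x => x | Neg, Pos => Neg | Neg, Neg => Pos end.
Definition sgn_opp (s : sgn) : sgn :=
  match s with Pos => Neg | Neg => Pos | Bal => Bal end.

Section Smax.
Variables (G : zmodType) (le : rel G).
Definition ltG (a b : G) := le a b && (a != b).

(* S_max: None is the zero 0; Some (s, a) is the element of modulus a and
   sign s (a, ⊖a, or a^• for s = Pos, Neg, Bal). *)
Definition Smax := option (sgn * G).

Definition szero : Smax := None.
Definition sone : Smax := Some (Pos, 0).
Definition sadd (x y : Smax) : Smax :=
  match x, y with
  | None, _ => y
  | _, None => x
  | Some (s, a), Some (t, b) =>
      if ltG a b then y else if ltG b a then x else Some (sgn_join s t, a)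
  end.
Definition smul (x y : Smax) : Smax :=
  match x, y with
  | Some (s, a), Some (t, b) => Some (sgn_mul s t, a + b)
  | _, _ => None
  end.
Definition sminus (x : Smax) : Smax :=
  match x with None => None | Some (s, a) => Some (sgn_opp s, a) end.
Definition spow (x : Smax) (m : nat) : Smax := iter m (smul x) sone.

Definition signed (x : Smax) : Prop :=
  match x with Some (Bal, _) => False | _ => True end.
Definition spositive (x : Smax) : Prop :=
  match x with Some (Pos, _) => True | _ => False end.
Definition slt (a b : Smax) : Prop := spositive (sadd b (sminus a)).
Definition sle (a b : Smax) : Prop := slt a b \/ a = b.

Definition qform n (A : 'M[Smax]_n) (x : 'I_n -> Smax) : Smax :=
  \big[sadd/szero]_(i < n) \big[sadd/szero]_(j < n) smul (smul (x i) (A i j)) (x j).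

Definition TPD n (A : 'M[Smax]_n) : Prop :=
  [/\ (forall i j, A i j = A j i),
      (forall i j, signed (A i j)) &
      (forall x : 'I_n -> Smax, (forall i, signed (x i)) ->
          (exists i, x i <> szero) -> slt szero (qform A x))].

Definition spoly := nat -> Smax.
Definition pconst (c : Smax) : spoly := fun k => if k == 0%N then c else szero.
Definition pzero : spoly := pconst szero.
Definition pone : spoly := pconst sone.
Definition pX : spoly := fun k => if k == 1%N then sone else szero.
Definition padd (p q : spoly) : spoly := fun k => sadd (p k) (q k).
Definition pscale (c : Smax) (p : spoly) : spoly := fun k => smul c (p k).
Definition pmul (p q : spoly) : spoly :=
  fun k => \big[sadd/szero]_(i < k.+1) smul (p i) (q (k - i)%N).

Definition sdet n (M : 'I_n -> 'I_n -> spoly) : spoly :=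
  \big[padd/pzero]_(s : 'S_n)
     pscale (if odd_perm s then sminus sone else sone)
            (\big[pmul/pone]_(i < n) M i (s i)).

Definition charpoly n (A : 'M[Smax]_n) : spoly :=
  sdet (fun i j => if i == j then padd pX (pconst (sminus (A i j)))
                   else pconst (sminus (A i j))).
End Smax.

(* Expand det(X I ⊖ A) over permutations s.  The part of the coefficient of X^k
   coming from s is a sum of products of the ⊖a_{i s(i)} over sets I of n - k rows,
   s fixing the other rows, so its modulus is at most that of some weight
   prod_{i in I} a_{i s(i)}.  Definiteness gives a_ii > 0 and a_ij^2 < a_ii a_jj for
   i <> j (test x^T A x on a vector supported on {i, j}; this needs square roots in
   the value group), hence for s <> id every such weight is strictly below
   prod_{i in I} a_ii, which is at most the product of the n - k largest diagonal
   entries.  For s = id all the products have sign (⊖1)^(n-k), so nothing cancels: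
   this term is exactly (⊖1)^(n-k) times the maximal product and absorbs the terms
   of all other permutations. *)

From mathcomp Require Import all_boot all_order all_algebra all_fingroup.
From HB Require Import structures.
Set Implicit Arguments. Unset Strict Implicit. Unset Printing Implicit Defensive.
Import GRing.Theory.
Local Open Scope ring_scope.

Section TropicalCharpoly.
Variables (G : zmodType) (le : rel G).
Hypothesis HG : div_tot_ord_group le.
Local Notation lt := (ltG le).

Lemma leG_refl a : le a a. Proof. by case: HG => [[]]. Qed.
Lemma leG_anti a b : le a b -> le b a -> a = b.
Proof. by case: HG => [[_ h]] *; apply: h. Qed.
Lemma leG_trans a b c : le a b -> le b c -> le a c.
Proof. by case: HG => _ h *; apply: h; eauto. Qed.
Lemma leG_total a b : le a b || le b a.
Proof. by case: HG => _ _ /(_ a b) [] ->; rewrite ?orbT. Qed.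

Lemma leGD2r a b c : le (a + c) (b + c) = le a b.
Proof.
case: HG => _ _ _ leD _; apply/idP/idP; last exact: leD.
by move/(leD _ _ (- c)); rewrite -!addrA subrr !addr0.
Qed.

Lemma leGD2l a b c : le (c + a) (c + b) = le a b.
Proof. by rewrite ![c + _]addrC leGD2r. Qed.

Lemma leGD a b c d : le a b -> le c d -> le (a + c) (b + d).
Proof. by move=> hab hcd; apply: (@leG_trans _ (b + c)); rewrite ?leGD2r ?leGD2l. Qed.

Lemma ltGNge a b : lt a b = ~~ le b a.
Proof.
rewrite /ltG; apply/andP/negP => [[hab /eqP hne] hba|hba]; first exact/hne/leG_anti.
split; first by case/orP: (leG_total a b) => // /hba.
by apply: contraNneq (introN idP hba) => ->; apply: leG_refl.
Qed.

Lemma leGNgt a b : le a b = ~~ lt b a. Proof. by rewrite ltGNge negbK. Qed.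
Lemma ltGW a b : lt a b -> le a b.
Proof. by rewrite ltGNge => hba; case/orP: (leG_total a b) => // /(negP hba). Qed.
Lemma ltG_leG_trans a b c : lt a b -> le b c -> lt a c.
Proof. by rewrite !ltGNge => hba hbc; apply: contra hba => /(leG_trans hbc). Qed.
Lemma leG_ltG_trans a b c : le a b -> lt b c -> lt a c.
Proof. by rewrite !ltGNge => hab; apply: contra => /leG_trans; apply. Qed.
Lemma ltG_trans a b c : lt a b -> lt b c -> lt a c.
Proof. by move/ltGW; apply: leG_ltG_trans. Qed.
Lemma ltGxx a : lt a a = false. Proof. by rewrite ltGNge leG_refl. Qed.
Lemma ltG_asym a b : lt a b -> lt b a = false.
Proof. by rewrite ltGNge => /negbTE; apply: contraFF => /ltGW. Qed.

Lemma ltGD a b c d : lt a b -> le c d -> lt (a + c) (b + d).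
Proof.
move=> hab hcd; apply: (@ltG_leG_trans _ (b + c)); last by rewrite leGD2l.
by rewrite !ltGNge leGD2r -ltGNge.
Qed.

Variant ltGgt_spec (a b : G) : bool -> bool -> Prop :=
  | LtG of lt a b : ltGgt_spec a b true false
  | EqG of a = b : ltGgt_spec a b false false
  | GtG of lt b a : ltGgt_spec a b false true.

Lemma ltGgtP a b : ltGgt_spec a b (lt a b) (lt b a).
Proof.
have [hab|hab] := boolP (lt a b); first by rewrite ltGNge (ltGW hab); constructor.
have [hba|hba] := boolP (lt b a); first by constructor.
by rewrite !ltGNge !negbK in hab hba; constructor; apply: leG_anti.
Qed.

Lemma leG_double a b : le (a + a) (b + b) = le a b.
Proof.
apply/idP/idP => [|hab]; last exact: leGD.
by apply: contraLR; rewrite -!ltGNge => hba; apply: ltGD hba (ltGW hba).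
Qed.

Lemma ltG_double a b : lt (a + a) (b + b) = lt a b.
Proof. by rewrite !ltGNge leG_double. Qed.

Lemma halveG (a : G) : exists b, b + b = a.
Proof. by case: HG => _ _ _ _ /(_ a 2%N isT) [b <-]; exists b; rewrite mulr2n. Qed.

Lemma sumG_le (I : finType) (P : pred I) (f g : I -> G) :
  (forall i, P i -> le (f i) (g i)) -> le (\sum_(i | P i) f i) (\sum_(i | P i) g i).
Proof.
move=> hfg; apply: (big_ind2 (fun x y => le x y)) => //; first exact: leG_refl.
by move=> *; apply: leGD.
Qed.

Lemma sumG_lt (I : finType) (P : pred I) (f g : I -> G) i0 : P i0 -> lt (f i0) (g i0) ->
  (forall i, P i -> le (f i) (g i)) -> lt (\sum_(i | P i) f i) (\sum_(i | P i) g i).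
Proof.
move=> Pi0 hlt hle; rewrite (bigD1 i0) // [X in lt _ X](bigD1 i0) //=.
by apply: ltGD => //; apply: sumG_le => i /andP[/hle].
Qed.

Lemma sgn_joinA : associative sgn_join. Proof. by do 3!case. Qed.
Lemma sgn_joinC : commutative sgn_join. Proof. by do 2!case. Qed.
Lemma sgn_joinxx s : sgn_join s s = s. Proof. by case: s. Qed.
Lemma sgn_mulA : associative sgn_mul. Proof. by do 3!case. Qed.
Lemma sgn_mulC : commutative sgn_mul. Proof. by do 2!case. Qed.

Local Notation S := (Smax G).
Local Notation sadd := (sadd le).

Lemma saddC : commutative sadd.
Proof. by case=> [[s a]|] [[t b]|] //=; case: ltGgtP => // <-; rewrite sgn_joinC. Qed.

Ltac ltG_contra :=
  match goal with
  | H : is_true (lt ?x ?x) |- _ => by rewrite ltGxx in H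
  | H1 : is_true (lt ?x ?y), H2 : is_true (lt ?y ?x) |- _ =>
      by rewrite (ltG_asym H1) in H2
  | H1 : is_true (lt ?x ?y), H2 : is_true (lt ?y ?z), H3 : is_true (lt ?z ?x) |- _ =>
      by rewrite (ltG_asym (ltG_trans H1 H2)) in H3
  end.

Ltac ltG_rewrite :=
  repeat first
    [ progress rewrite /= ?ltGxx
    | match goal with
      | H : is_true (lt ?x ?y) |- context[lt ?x ?y] => rewrite H
      | H : is_true (lt ?x ?y) |- context[lt ?y ?x] => rewrite (ltG_asym H)
      end ].

Lemma saddA : associative sadd.
Proof.
case=> [[s a]|] [[t b]|] [[u c]|] //=; last by case: ltGgtP.
have [hab|eab|hab] := ltGgtP a b; have [hbc|ebc|hbc] := ltGgtP b c;
  have [hac|eac|hac] := ltGgtP a c; subst; try ltG_contra; ltG_rewrite;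
  by rewrite ?sgn_joinA.
Qed.

Lemma smulA : associative (@smul G).
Proof. by case=> [[s a]|] [[t b]|] [[u c]|] //=; rewrite sgn_mulA addrA. Qed.
Lemma smulC : commutative (@smul G).
Proof. by case=> [[s a]|] [[t b]|] //=; rewrite sgn_mulC addrC. Qed.
Lemma smul1s : left_id (sone G) (@smul G).
Proof. by case=> [[[] a]|] //=; rewrite add0r. Qed.
Lemma smuls0 x : smul x (szero G) = szero G. Proof. by case: x => [[]|]. Qed.

HB.instance Definition _ :=
  Monoid.isComLaw.Build S (szero G) sadd saddA saddC (fun _ => erefl).
HB.instance Definition _ :=
  Monoid.isComLaw.Build S (sone G) (@smul G) smulA smulC smul1s.

Lemma sadds0 x : sadd x (szero G) = x. Proof. exact: Monoid.mulm1. Qed.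

Lemma bigsmul_some (I : finType) (P : pred I) (F : I -> S) (g : I -> G) :
  (forall i, P i -> exists sg, F i = Some (sg, g i)) ->
  exists sg, \big[@smul G/sone G]_(i | P i) F i = Some (sg, \sum_(i | P i) g i).
Proof.
move=> hF; apply: (big_rec2 (fun x y => exists sg, x = Some (sg, y))); first by exists Pos.
by move=> i ? ? /hF [sg ->] [sg' ->]; eexists.
Qed.

Lemma bigsmul_pos (I : finType) (P : pred I) (F : I -> S) (g : I -> G) :
  (forall i, P i -> F i = Some (Pos, g i)) ->
  \big[@smul G/sone G]_(i | P i) F i = Some (Pos, \sum_(i | P i) g i).
Proof. by move=> hF; apply: (big_rec2 (fun x y => x = Some (Pos, y))) => // i ? ? /hF -> ->. Qed.

Definition negpow_sgn m := iter m (sgn_mul Neg) Pos.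

Lemma spow_sminus1 m : spow (sminus (sone G)) m = Some (negpow_sgn m, 0).
Proof. by elim: m => // m IH; rewrite /spow iterS -/(spow _ m) IH /= addr0. Qed.

Definition mle (x y : S) : bool :=
  match x, y with
  | None, _ => true
  | Some _, None => false
  | Some (_, a), Some (_, b) => le a b
  end.

Definition mod_below (M : G) (x : S) : bool :=
  if x is Some (_, a) then lt a M else true.

Lemma mle_refl x : mle x x. Proof. by case: x => [[? a]|] //=; apply: leG_refl. Qed.

Lemma mle_trans x y z : mle x y -> mle y z -> mle x z.
Proof.
by case: x => [[? a]|] //; case: y => [[? b]|] //; case: z => [[? c]|] //=; apply: leG_trans.
Qed.

Lemma mle_total x y : mle x y || mle y x.
Proof. by case: x => [[? a]|]; case: y => [[? b]|] //=; apply: leG_total. Qed.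

Lemma mle_sminusl x y : mle (sminus x) y = mle x y. Proof. by case: x => [[]|]. Qed.
Lemma mle_sminusr x y : mle x (sminus y) = mle x y.
Proof. by case: x => [[? ?]|] //; case: y => [[? ?]|]. Qed.

Lemma mle_smul x x' y y' : mle x x' -> mle y y' -> mle (smul x y) (smul x' y').
Proof. by case: x x' y y' => [[? ?]|] [[? ?]|] [[? ?]|] [[? ?]|] //=; apply: leGD. Qed.

Lemma mle_smul_unit sg x : mle (smul (Some (sg, 0)) x) x.
Proof. by case: x => [[? b]|] //=; rewrite add0r leG_refl. Qed.

Lemma mle_saddl x y : mle x (sadd x y).
Proof.
case: x y => [[s a]|] [[t b]|] //=; rewrite ?leG_refl //.
by case: (ltGgtP a b) => [/ltGW|_|_] //=; rewrite leG_refl.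
Qed.

Lemma mle_saddr x y : mle y (sadd x y). Proof. by rewrite saddC mle_saddl. Qed.

Lemma mle_sadd x y z : mle x z -> mle y z -> mle (sadd x y) z.
Proof. by case: x y => [[s a]|] [[t b]|] //=; case: ifP => _ //; case: ifP. Qed.

Lemma mod_below_mle M x y : mle x y -> mod_below M y -> mod_below M x.
Proof. by case: x y => [[? a]|] [[? b]|] //=; apply: leG_ltG_trans. Qed.

Lemma mod_below_leG M M' x : le M M' -> mod_below M x -> mod_below M' x.
Proof. by case: x => [[? a]|] //= hM /ltG_leG_trans; apply. Qed.

Lemma mod_below_sadd M x y : mod_below M x -> mod_below M y -> mod_below M (sadd x y).
Proof. by case: x y => [[s a]|] [[t b]|] //=; case: ifP => _ //; case: ifP. Qed.

Lemma sadd_mod_below s M y : mod_below M y -> sadd (Some (s, M)) y = Some (s, M).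
Proof. by case: y => [[t b]|] //= hb; rewrite hb (ltG_asym hb). Qed.

Lemma sadd_same_sgn s a b : exists c, sadd (Some (s, a)) (Some (s, b)) = Some (s, c).
Proof. by rewrite /=; case: (ltGgtP a b); eexists; rewrite ?sgn_joinxx. Qed.

Lemma sle_pos a b : sle le (Some (Pos, a)) (Some (Pos, b)) -> le a b.
Proof.
rewrite leGNgt => -[|[->]]; last by rewrite ltGxx.
by rewrite /slt /=; case: (ltGgtP b a).
Qed.

Lemma sadd_not_pos s M y : s <> Pos -> mle y (Some (Pos, M)) ->
  ~ spositive (sadd (Some (s, M)) y).
Proof.
case: s => [/(_ erefl)//|_|_]; case: y => [[t b] /= hb|_ []];
  by rewrite (ltGNge M b) hb /=; case: ifP => _ //; case: t.
Qed.

Lemma bigsadd_not_pos (I : finType) (F : I -> S) i0 s M :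
  s <> Pos -> F i0 = Some (s, M) -> (forall i, mle (F i) (Some (Pos, M))) ->
  ~ spositive (\big[sadd/szero G]_i F i).
Proof.
move=> hs hi0 hF; rewrite (bigD1 i0) //= hi0; apply: sadd_not_pos => //.
by apply: (big_ind (fun x => mle x (Some (Pos, M)))) => // x y; apply: mle_sadd.
Qed.

Lemma coef_bigpadd (I : Type) (r : seq I) (P : pred I) (F : I -> spoly G) k :
  (\big[padd le/pzero G]_(i <- r | P i) F i) k = \big[sadd/szero G]_(i <- r | P i) F i k.
Proof. by apply: (big_morph (fun p : spoly G => p k)) => //; case: k. Qed.

Lemma coef_pmul_linear (p q : spoly G) k : (forall j, (1 < j)%N -> p j = szero G) ->
  pmul le p q k =
  sadd (smul (p 0%N) (q k)) (if k is k'.+1 then smul (p 1%N) (q k') else szero G).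
Proof.
move=> hp; rewrite /pmul big_ord_recl subn0; case: k => [|k]; first by rewrite big_ord0.
by rewrite big_ord_recl /= subSS subn0 big1 ?sadds0 // => i _; rewrite hp.
Qed.

Section Expansion.
Variables (n : nat) (A : 'M[S]_n).

Definition charmx i j : spoly G :=
  if i == j then padd le (pX G) (pconst (sminus (A i j))) else pconst (sminus (A i j)).

Lemma coef_charmx i j k : charmx i j k =
  if k == 0%N then sminus (A i j) else if (k == 1%N) && (i == j) then sone G else szero G.
Proof. by rewrite /charmx; case: (i == j); case: k => [|[|k]]. Qed.

Definition permprod (s : 'S_n) (r : seq 'I_n) : spoly G :=
  \big[pmul le/pone G]_(i <- r) charmx i (s i).

Lemma coef_permprod_cons s x r k : permprod s (x :: r) k =
  sadd (smul (sminus (A x (s x))) (permprod s r k))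
       (if k is k'.+1 then smul (if x == s x then sone G else szero G) (permprod s r k')
        else szero G).
Proof.
rewrite /permprod big_cons coef_pmul_linear ?coef_charmx //.
by move=> [|[|j]] // _; rewrite coef_charmx.
Qed.

Lemma charpoly_coefE k : charpoly le A k = \big[sadd/szero G]_(s : 'S_n)
  smul (if odd_perm s then sminus (sone G) else sone G) (permprod s (index_enum 'I_n) k).
Proof. exact: coef_bigpadd. Qed.

(* The monomials of degree k in the product over r of (X δ_{i,s i} ⊖ a_{i,s i})
   that take the constant factor exactly on the rows of I. *)
Definition expansion_choice (s : 'S_n) (r : seq 'I_n) k (I : {set 'I_n}) :=
  [/\ {subset I <= r}, (#|I| + k)%N = size r & forall i, i \in r -> i \notin I -> s i = i].

Definition weight (s : 'S_n) (I : {set 'I_n}) := \big[@smul G/sone G]_(i in I) A i (s i).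

Definition weight_dominated s (V : {set 'I_n} -> Prop) (u : S) :=
  u = szero G \/ exists2 I, V I & mle u (weight s I).

Lemma weight_dominated_sadd s V u v :
  weight_dominated s V u -> weight_dominated s V v -> weight_dominated s V (sadd u v).
Proof.
case=> [->|[I VI hu]] //; case=> [->|[J VJ hv]]; first by right; exists I; rewrite ?sadds0.
right; case/orP: (mle_total (weight s I) (weight s J)) => hIJ.
  by exists J => //; apply: mle_sadd => //; apply: mle_trans hIJ.
by exists I => //; apply: mle_sadd => //; apply: mle_trans hIJ.
Qed.

Lemma permprod_dominated s r k :
  uniq r -> weight_dominated s (expansion_choice s r k) (permprod s r k).
Proof.
elim: r k => [|x r IH] k.
  case: k => [_|k _]; last by left; rewrite /permprod big_nil.
  right; exists set0; last by rewrite /weight /permprod big_set0 big_nil mle_refl.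
  by split=> [i|//|i]; rewrite ?in_set0 ?cards0.
case/andP=> xr ur; rewrite coef_permprod_cons; apply: weight_dominated_sadd.
  case: (IH k ur) => [->|[I [sub_r hsize hfix] hle]]; first by rewrite smuls0; left.
  have xI : x \notin I by apply: contra xr; apply: sub_r.
  right; exists (x |: I).
    split=> [i||i].
    - by rewrite in_setU1 in_cons => /orP[->|/sub_r ->]; rewrite ?orbT.
    - by rewrite cardsU1 xI add1n addSn hsize.
    - rewrite in_cons in_setU1 negb_or => /orP[/eqP ->|ir]; first by rewrite eqxx.
      by case/andP=> _; apply: hfix.
  by rewrite /weight big_setU1 //=; apply: mle_smul; rewrite ?mle_sminusl ?mle_refl.
case: k => [|k]; first by left.
have [xfix|] := boolP (x == s x); last by left.
rewrite smul1s; case: (IH k ur) => [->|[I [sub_r hsize hfix] hle]]; first by left.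
right; exists I => //; split=> [i /sub_r|| i].
- by rewrite in_cons => ->; rewrite orbT.
- by rewrite /= addnS hsize.
- by rewrite in_cons => /orP[/eqP ->|/hfix //]; move/eqP: xfix.
Qed.

Lemma permprod_coef_gt s r k : uniq r -> (size r < k)%N -> permprod s r k = szero G.
Proof.
move=> ur; case: (permprod_dominated s k ur) => [//|[I [_ <- _] _]].
by rewrite ltnNge leq_addl.
Qed.

Lemma weight1_le_permprod1 r k I :
  uniq r -> expansion_choice 1 r k I -> mle (weight 1 I) (permprod 1 r k).
Proof.
elim: r k I => [|x r IH] k I.
  move=> _ [_ /eqP]; rewrite addn_eq0 cards_eq0 => /andP[/eqP -> /eqP ->].
  by rewrite /weight /permprod big_set0 big_nil mle_refl.
case/andP=> xr ur [sub_r hsize _]; rewrite coef_permprod_cons.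
have [xI|xI] := boolP (x \in I).
  have hJ : expansion_choice 1 r k (I :\ x).
    split=> [i||i _ _]; last by rewrite perm1.
    - by rewrite in_setD1 => /andP[hix /sub_r]; rewrite in_cons (negbTE hix).
    - by move: hsize; rewrite (cardsD1 x I) xI add1n addSn => -[].
  rewrite /weight (big_setD1 _ xI) /=; apply: mle_trans (mle_saddl _ _).
  by rewrite perm1; apply: mle_smul; [rewrite mle_sminusr mle_refl | apply: IH].
have sub_r' : {subset I <= r}.
  by move=> i iI; move: (sub_r i iI); rewrite in_cons => /orP[/eqP ix|//]; rewrite -ix iI in xI.
have hI : (#|I| <= size r)%N.
  by rewrite cardE; apply: uniq_leq_size (enum_uniq _) _ => i; rewrite mem_enum => /sub_r'.
case: k hsize => [|k] hsize; first by rewrite addn0 /= in hsize; rewrite hsize ltnn in hI.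
rewrite perm1 eqxx smul1s; apply: mle_trans (mle_saddr _ _); apply: IH => //.
by split=> // [|i _ _]; [move: hsize; rewrite addnS => -[] | rewrite perm1].
Qed.

Lemma permprod1_sgn r k : (forall i, exists a, A i i = Some (Pos, a)) ->
  uniq r -> (k <= size r)%N -> exists mu, permprod 1 r k = Some (negpow_sgn (size r - k), mu).
Proof.
move=> diag_pos; elim: r k => [|x r IH] k.
  by rewrite leqn0 => _ /eqP ->; exists 0; rewrite /permprod big_nil.
case/andP=> xr ur; have [a hxx] := diag_pos x; rewrite coef_permprod_cons perm1 hxx.
case: k => [_|k hk].
  by have [mu ->] := IH 0%N ur isT; exists (a + mu); rewrite sadds0 !subn0.
rewrite eqxx smul1s; have [mu' ->] := IH k ur hk; case: (ltnP k (size r)) => hkr.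
  have [mu ->] := IH k.+1 ur hkr; rewrite subSS -(subnSK hkr).
  by have [c ->] := sadd_same_sgn (negpow_sgn (size r - k.+1).+1) (a + mu) mu'; exists c.
have -> : k = size r by apply/eqP; rewrite eqn_leq hkr -ltnS hk.
by rewrite permprod_coef_gt // smuls0 [size (x :: r)]/= subSS !subnn; exists mu'.
Qed.

Lemma size_index_enum_ord : size (index_enum 'I_n) = n.
Proof. by rewrite -[RHS]card_ord cardT enumT. Qed.

Lemma charpoly_coef_gt k : (n < k)%N -> charpoly le A k = szero G.
Proof.
move=> hk; rewrite charpoly_coefE big1 // => s _.
by rewrite permprod_coef_gt ?smuls0 ?index_enum_uniq ?size_index_enum_ord.
Qed.

Lemma qform_delta i : qform le A (fun l => if l == i then sone G else szero G) = A i i.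
Proof.
rewrite /qform (bigD1 i) //= (bigD1 i) //= eqxx smul1s smulC smul1s.
rewrite big1 ?sadds0 => [|j /negbTE ->]; last by rewrite smuls0.
by rewrite big1 ?sadds0 // => l /negbTE ->; rewrite big1.
Qed.

End Expansion.

Section TPD.
Variables (n : nat) (A : 'M[S]_n).
Hypothesis HA : TPD le A.

Lemma TPD_qform_pos (x : 'I_n -> S) : (forall i, signed (x i)) -> (exists i, x i <> szero G) ->
  spositive (qform le A x).
Proof. by case: HA => _ _ hpos hs hne; move: (hpos x hs hne); rewrite /slt /= sadds0. Qed.

Definition diagmod i := if A i i is Some (_, a) then a else 0.

Lemma TPD_diag i : A i i = Some (Pos, diagmod i).
Proof.
have := @TPD_qform_pos (fun l => if l == i then sone G else szero G).
rewrite qform_delta /diagmod; case: (A i i) => [[[] a]|] // hpos; exfalso.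
all: by apply: hpos => [l|]; [case: (l == i) | exists i; rewrite eqxx].
Qed.

Lemma TPD_offdiag i j t tau : i != j -> A i j = Some (t, tau) ->
  lt (tau + tau) (diagmod i + diagmod j).
Proof.
move=> hij hAij; rewrite ltGNge; apply/negP => hle.
have ht : t <> Bal by case: HA => _ /(_ i j); rewrite hAij; case: (t).
set a := diagmod i; set b := diagmod j.
have [u hu] := halveG (b - a); set M := tau + u.
have hbM : le b M.
  rewrite -leG_double (_ : b + b = a + b + (u + u)); last by rewrite hu addrAC [a + _]addrC subrK.
  by rewrite (_ : M + M = tau + tau + (u + u)) ?leGD2r // addrACA.
(* If a_ij^2 >= a_ii a_jj, take x_i = u with u^2 = a_jj / a_ii and x_j = ⊖sgn a_ij:
   the cross terms of x^T A x are then negative and of maximal modulus. *)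
pose x l := if l == i then Some (Pos, u) else if l == j then Some (sgn_opp t, 0) else szero G.
have : spositive (qform le A x).
  apply: TPD_qform_pos => [l|]; last by exists i; rewrite /x eqxx.
  by rewrite /x; case: (l == i) => //; case: (l == j) => //; move: ht; case: (t).
rewrite /qform pair_bigA; apply: (@bigsadd_not_pos _ _ (i, j) Neg M) => //=.
  by rewrite /x eqxx eq_sym (negbTE hij) eqxx hAij /= addr0 addrC; move: ht; case: (t).
have hAji : A j i = A i j by case: HA.
move=> [i' j'] /=; rewrite /x.
case: (i' =P i) => [->|_]; case: (j' =P i) => [->|_] //.
- by rewrite TPD_diag /= -/a (addrC u) -addrA addrC hu subrK.
- by case: (j' =P j) => [->|_]; rewrite ?smuls0 //= hAij /= addr0 addrC leG_refl.
- by case: (i' =P j) => [->|_] //; rewrite hAji hAij /= add0r leG_refl.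
- case: (i' =P j) => [->|_] //; case: (j' =P j) => [->|_]; rewrite ?smuls0 //.
  by rewrite TPD_diag /= addr0 add0r.
Qed.

Lemma weight1 I : weight A 1 I = Some (Pos, \sum_(i in I) diagmod i).
Proof. by apply: bigsmul_pos => i _; rewrite perm1 TPD_diag. Qed.

Lemma weight_nonid_below s I : s != 1%g -> perm_on I s ->
  mod_below (\sum_(i in I) diagmod i) (weight A s I).
Proof.
move=> hs sI; have [i0 hi0] : exists i0, s i0 != i0.
  apply/existsP; apply: contraR hs => /existsPn fix_s.
  by apply/eqP/permP => i; rewrite perm1; apply/eqP/negbNE.
have i0I : i0 \in I by apply: (subsetP sI); rewrite inE.
have [|all_some] := boolP [exists i in I, ~~ A i (s i)].
  case/existsP => i /andP[iI]; case hAi: (A i (s i)) => // _.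
  by rewrite /weight [X in mod_below _ X](bigD1 i) //= hAi.
pose m i := if A i (s i) is Some (_, c) then c else 0.
have hAm i : i \in I -> exists sg, A i (s i) = Some (sg, m i).
  rewrite /m; case hAi: (A i (s i)) => [[sg c]|] iI; first by exists sg.
  by move/existsPn: all_some => /(_ i); rewrite iI hAi.
have hm_lt i : i \in I -> s i != i -> lt (m i + m i) (diagmod i + diagmod (s i)).
  by move=> iI hsi; have [sgi hAi] := hAm i iI; apply: TPD_offdiag hAi; rewrite eq_sym.
have hm_le i : i \in I -> le (m i + m i) (diagmod i + diagmod (s i)).
  move=> iI; have [/eqP fix_i|] := boolP (s i == i); last by move/(hm_lt i iI)/ltGW.
  by rewrite /m fix_i TPD_diag /= leG_refl.
(* Compare squares: as s permutes I, the doubled diagonal sum is the sum of the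
   diagmod i + diagmod (s i). *)
rewrite /weight; have [sg ->] := bigsmul_some hAm; rewrite /= -ltG_double.
have -> : \sum_(i in I) diagmod i + \sum_(i in I) diagmod i =
          \sum_(i in I) (diagmod i + diagmod (s i)).
  rewrite big_split /=; congr (_ + _); rewrite (reindex_inj (@perm_inj _ s)) /=.
  by apply: eq_bigl => i; rewrite (perm_closed _ sI).
by rewrite -big_split /=; apply: sumG_lt i0I (hm_lt _ i0I hi0) hm_le.
Qed.

Lemma charpoly_coef_TPD k M : (k <= n)%N ->
  (forall I : {set 'I_n}, #|I| = (n - k)%N -> le (\sum_(i in I) diagmod i) M) ->
  (exists2 I : {set 'I_n}, #|I| = (n - k)%N & \sum_(i in I) diagmod i = M) ->
  charpoly le A k = Some (negpow_sgn (n - k), M).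
Proof.
move=> hk hmax [I0 hI0 hM]; have ur := index_enum_uniq 'I_n.
have card_choice s I : expansion_choice s (index_enum 'I_n) k I -> #|I| = (n - k)%N.
  by move=> [_ hsize _]; apply/eqP; rewrite -(eqn_add2r k) subnK // hsize size_index_enum_ord.
have id_term : permprod A 1 (index_enum 'I_n) k = Some (negpow_sgn (n - k), M).
  have diag_pos i : exists a, A i i = Some (Pos, a) by exists (diagmod i); apply: TPD_diag.
  have hk' : (k <= size (index_enum 'I_n))%N by rewrite size_index_enum_ord.
  have [mu hmu] := permprod1_sgn diag_pos ur hk'.
  rewrite hmu size_index_enum_ord; congr (Some (_, _)); apply: leG_anti.
    case: (permprod_dominated A 1 k ur) => [|[I hI]]; first by rewrite hmu.
    by rewrite hmu weight1 => /leG_trans; apply; apply/hmax/(card_choice 1%g).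
  have := @weight1_le_permprod1 _ A _ k I0 ur; rewrite hmu weight1 hM; apply.
  split=> [i _|| i _ _]; first exact: mem_index_enum.
    by rewrite hI0 size_index_enum_ord subnK.
  by rewrite perm1.
rewrite charpoly_coefE (bigD1 1%g) //= odd_perm1 smul1s id_term sadd_mod_below //.
apply: (big_ind (mod_below M)) => // [x y|s hs]; first exact: mod_below_sadd.
apply: mod_below_mle (_ : mle _ (permprod A s (index_enum 'I_n) k)) _.
  by case: odd_perm; apply: mle_smul_unit.
case: (permprod_dominated A s k ur) => [-> //|[I hI hle]].
apply: mod_below_mle hle _; apply: mod_below_leG (hmax _ (card_choice _ _ hI)) _.
apply: weight_nonid_below => //; case: hI => _ _ hfix.
by apply/subsetP => i; rewrite inE; apply: contraR => /(hfix i (mem_index_enum i))/eqP.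
Qed.

End TPD.

Section SortedSums.
Variable n : nat.

Lemma leG_antitone_ord (f : 'I_n -> G) :
  (forall i j : 'I_n, j = i.+1 :> nat -> le (f j) (f i)) ->
  forall i j : 'I_n, (i <= j)%N -> le (f j) (f i).
Proof.
move=> hstep i j /subnKC; move: (j - i)%N => m; elim: m j => [|m IH] j hj.
  by rewrite addn0 in hj; rewrite (_ : j = i) ?leG_refl //; apply: val_inj.
have hm : (i + m < n)%N by rewrite (leq_trans _ (ltn_ord j)) // -hj addnS.
by apply: leG_trans (IH (Ordinal hm) erefl); apply: hstep; rewrite /= -hj addnS.
Qed.

Lemma card_ord_prefix c : (c <= n)%N -> #|[set j : 'I_n | (j < c)%N]| = c.
Proof.
move=> hc; have widen_inj : injective (widen_ord hc) by move=> x y /(congr1 val) /= /val_inj.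
rewrite -[RHS](card_ord c) -(card_imset _ widen_inj).
apply: eq_card => j; rewrite inE; apply/idP/imsetP => [hj|[j' _ ->] /=]; last exact: ltn_ord.
by exists (Ordinal hj) => //; apply: val_inj.
Qed.

Lemma sum_antitone_le_prefix (f : 'I_n -> G) :
  (forall i j : 'I_n, (i <= j)%N -> le (f j) (f i)) ->
  forall J : {set 'I_n}, le (\sum_(j in J) f j) (\sum_(j < n | (j < #|J|)%N) f j).
Proof.
move=> anti J; set c := #|J|; set P := [set j : 'I_n | (j < c)%N].
have hc : (c <= n)%N by rewrite -[X in (_ <= X)%N]card_ord max_card.
have -> : \sum_(j < n | (j < c)%N) f j = \sum_(j in P) f j by apply: eq_bigl => j; rewrite inE.
rewrite (big_setID P) [X in le _ X](big_setID J) /= setIC leGD2l.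
have hcard : #|J :\: P| = #|P :\: J|.
  by apply/eqP; rewrite -(eqn_add2l #|J :&: P|) cardsID setIC cardsID card_ord_prefix.
have [PJ0|[p0 hp0]] := set_0Vmem (P :\: J).
  have JP0 : J :\: P = set0 by apply: cards0_eq; rewrite hcard PJ0 cards0.
  by rewrite JP0 PJ0 !big_set0 leG_refl.
have c_gt0 : (0 < c)%N by move: hp0; rewrite !inE => /andP[_]; case: (c).
have hq : (c.-1 < n)%N by rewrite prednK.
apply: (@leG_trans _ (\sum_(j in J :\: P) f (Ordinal hq))).
  by apply: sumG_le => j; rewrite !inE -leqNgt => /andP[hj _]; apply/anti/(leq_trans (leq_pred c)).
rewrite (sumr_const (mem (J :\: P))) hcard -(sumr_const (mem (P :\: J))).
by apply: sumG_le => j; rewrite !inE => /andP[_ hj]; apply: anti; rewrite /= -ltnS prednK.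
Qed.

Lemma sum_perm_antitone_le (g : 'I_n -> G) (sigma : 'S_n) :
  (forall i j : 'I_n, (i <= j)%N -> le (g (sigma j)) (g (sigma i))) ->
  forall I : {set 'I_n}, le (\sum_(i in I) g i) (\sum_(j < n | (j < #|I|)%N) g (sigma j)).
Proof.
move=> anti I; rewrite (reindex_inj (@perm_inj _ sigma)) /=.
have -> : \sum_(j | sigma j \in I) g (sigma j) = \sum_(j in sigma @^-1: I) g (sigma j).
  by apply: eq_bigl => j; rewrite inE.
by rewrite -(card_preimset I (@perm_inj _ sigma)); apply: (sum_antitone_le_prefix anti).
Qed.

Lemma sum_perm_prefix (g : 'I_n -> G) (sigma : 'S_n) c : (c <= n)%N ->
  exists2 I : {set 'I_n}, #|I| = c & \sum_(i in I) g i = \sum_(j < n | (j < c)%N) g (sigma j).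
Proof.
move=> hc; exists (sigma @: [set j : 'I_n | (j < c)%N]).
  by rewrite card_imset ?card_ord_prefix //; apply: perm_inj.
rewrite big_imset /=; last by move=> x y _ _; apply: perm_inj.
by apply: eq_bigl => j; rewrite inE.
Qed.

End SortedSums.

End TropicalCharpoly.

Theorem corollary4p7 (G : zmodType) (le : rel G) (HG : div_tot_ord_group le)
  (n : nat) (A : 'M[Smax G]_n) (HA : TPD le A)
  (d : 'I_n -> Smax G) (sigma : 'S_n)
  (Hd : forall i, d i = A (sigma i) (sigma i))
  (Hsorted : forall i j : 'I_n, nat_of_ord j = (nat_of_ord i).+1 -> sle le (d j) (d i)) :
  forall k : nat, charpoly le A k =
    (if (k <= n)%N then
       smul (spow (sminus (sone G)) (n - k))
            (\big[@smul G/sone G]_(i < n | (nat_of_ord i < n - k)%N) d i)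
     else szero G).
Proof.
move=> k; have [hk|hk] := leqP k n; last exact: charpoly_coef_gt.
have d_pos i : d i = Some (Pos, diagmod A (sigma i)) by rewrite Hd (TPD_diag HG HA).
have anti : forall i j : 'I_n, (i <= j)%N -> le (diagmod A (sigma j)) (diagmod A (sigma i)).
  apply: (leG_antitone_ord HG) => i j hij.
  by apply: (sle_pos HG); rewrite -!d_pos; apply: Hsorted.
rewrite spow_sminus1 (bigsmul_pos (fun i _ => d_pos i)) /= add0r.
rewrite (charpoly_coef_TPD HG HA (M := \sum_(j < n | (j < n - k)%N) diagmod A (sigma j)) hk).
- by case: negpow_sgn.
- by move=> I <-; apply: sum_perm_antitone_le.
- by apply: sum_perm_prefix; rewrite leq_subr.
Qed.
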